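(* Let $(g_0,\mathbf e)$ be a generalized $\mathcal{G}$-coding with terminal vertex sequence $(z_k)$ (with $z_0=\iota(e_1)$) and associated quasi-geodesic sequence $(g_k)_{k\ge0}$. Then for every $k$ (with $k+1$ in the index set), $g_{k+1}W(z_{k+1})\subsetneq g_kW(z_k)$. Moreover, no element of $\Gamma$ appears in the sequence $(g_k)$ more than $\#Z$ times.
   Context: Setup. $\Gamma$ is a finitely generated group hyperbolic relative to a finite nonempty collection $\mathcal{P}$ of infinite subgroups, with $(\Gamma,\mathcal{P})$ non-elementary, and $\mathcal{S}$ a finite symmetric generating set with $P\cap\mathcal{S}$ generating $P$ for each $P\in\mathcal{P}$. $X$ is the Groves–Manning cusped space (the Cayley graph with combinatorial horoballs glued along the cosets $gP$), a locally finite graph with unit edges, metric $d_X$, $\delta$-hyperbolic for a fixed integer $\delta\ge1$; $|g|_X=d_X(\mathrm{id},g)$. Its Gromov boundary is the Bowditch boundary $\partial(\Gamma,\mathcal{P})$, with a fixed metric $d_\partial$ (balls $B_r$, neighborhoods $N_r$, closed neighborhoods $\overline N_r$, $\operatorname{diam}$ w.r.t. $d_\partial$). $\Pi$ is the finite set of points fixed by groups in $\mathcal{P}$, $\Gamma_p$ the group fixing $p\in\Pi$; translates $gp$ are parabolic points, and all other boundary points are conical limit points. $D>0$ is such that any distinct $x,y$ have some $g\in\Gamma$ with $d_\partial(gx,gy)>D$; for $p\in\Pi$, $K_p\subset\partial(\Gamma,\mathcal{P})\setminus\{p\}$ is compact with $\Gamma_pK_p=\partial(\Gamma,\mathcal{P})\setminus\{p\}$,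 and $D_\Pi>0$ satisfies $D_\Pi<\operatorname{diam}K_p$, $D_\Pi<d_\partial(K_p,p)$ for all $p$. Automaton. Fix $0<\varepsilon<\min(D/5,D_\Pi/5)$, a finite set $Z\subset\partial(\Gamma,\mathcal{P})$, and for each $z\in Z$ open sets $V(z),W(z),\hat V(z),\hat W(z)$ and a set $L(z)\subset\Gamma$ such that: if $z$ is conical, $L(z)=\{\alpha_z\}$, $\hat V(z)=\alpha_z^{-1}V(z)$, $\hat W(z)=\alpha_z^{-1}W(z)$; if $z=gp$ is parabolic ($p\in\Pi$), then $L(z)=g\Gamma_p\setminus F_z$ for a finite set $F_z$, $\hat V(z)\subset\hat W(z)\subset\partial(\Gamma,\mathcal{P})\setminus\{p\}$ and $p\notin\overline N_\varepsilon(\hat W(z))$; the sets $V(z)$, $z\in Z$, cover $\partial(\Gamma,\mathcal{P})$; and for all $z\in Z$: (C1) $\operatorname{diam}W(z)<\varepsilon$; (C2) $\operatorname{diam}\hat W(z)>4\varepsilon$; (C3) $\overline N_{2\varepsilon}(\hat V(z))\subset\hat W(z)$; (C4) $W(z)=\{z\}\cup\bigcup_{\alpha\in L(z)}\alpha\hat W(z)$; (C5) $V(z)=\{z\}\cup\bigcup_{\alpha\in L(z)}\alpha\hat V(z)$ and $\overline{V(z)}\subset W(z)$; (C6) for all $y,z\in Z$, $\overline{\hat V(z)}\cap\overline{V(y)}=\emptyset$ iff $\hat V(z)\cap V(y)=\emptyset$. The automaton $\mathcal{G}$ is the directed graph with vertex set $Z$ where, for $y,z\in Z$, there is no edge from $z$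 to $y$ if $\hat V(z)\cap V(y)=\emptyset$, and otherwise there is exactly one edge from $z$ to $y$ labeled $\alpha$ for each $\alpha\in L(z)$. For an edge $e$, $\iota(e),\tau(e),\mathrm{Lab}(e)$ denote its initial vertex, terminal vertex and label. Codings. A strict conical coding is an infinite edge path $\mathbf e=(e_k)_{k\ge1}$ in $\mathcal{G}$; writing $\alpha_k=\mathrm{Lab}(e_k)$, $z_k=\tau(e_k)$ ($k\ge1$), $z_0=\iota(e_1)$, it is a strict coding of $\zeta$ if $\zeta\in\bigcap_{k\ge0}\alpha_1\cdots\alpha_k\overline{W(z_k)}$. A strict parabolic coding is a finite edge path $e_1,\dots,e_n$ ($n\ge0$) whose final vertex $q$ is parabolic; it is a strict coding of $\zeta$ if $\zeta=\alpha_1\cdots\alpha_nq$. A generalized coding is a pair $(g_0,\mathbf e)$ with $g_0\in\Gamma$ and $\mathbf e$ a strict coding (conical or parabolic); if $\mathbf e$ codes $\xi$, then $(g_0,\mathbf e)$ codes $g_0\xi$. Its label/terminal vertex sequences are those of $\mathbf e$, and its associated quasi-geodesic sequence is $g_k:=g_0\alpha_1\cdots\alpha_k$, $k\ge0$. *)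

From Stdlib Require Import Reals List Lra.
Open Scope R_scope.
Set Implicit Arguments.

Record Grp := {
  gcar :> Type;
  gmul : gcar -> gcar -> gcar;
  ginv : gcar -> gcar;
  gone : gcar;
  gmulA : forall a b c, gmul a (gmul b c) = gmul (gmul a b) c;
  gmul1l : forall a, gmul gone a = a;
  gmul1r : forall a, gmul a gone = a;
  gmulVl : forall a, gmul (ginv a) a = gone;
  gmulVr : forall a, gmul a (ginv a) = gone }.
Arguments gmul {_}. Arguments ginv {_}. Arguments gone {_}.

Fixpoint gpow (G : Grp) (g : G) (n : nat) : G :=
  match n with O => gone | S m => gmul g (gpow G g m) end.

Definition is_subgroup (G : Grp) (H : G -> Prop) : Prop :=
  H gone /\ (forall a b, H a -> H b -> H (gmul a b)) /\ (forall a, H a -> H (ginv a)).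

Inductive gen_by (G : Grp) (A : G -> Prop) : G -> Prop :=
| gen_one : gen_by G A gone
| gen_mul : forall s g, A s -> gen_by G A g -> gen_by G A (gmul s g)
| gen_mulV : forall s g, A s -> gen_by G A g -> gen_by G A (gmul (ginv s) g).

Definition infinite_set (T : Type) (H : T -> Prop) : Prop :=
  ~ exists l : list T, forall x, H x -> In x l.

Definition conjugate_subgroups (G : Grp) (H K : G -> Prop) : Prop :=
  exists c : G, forall g, H g <-> K (gmul (ginv c) (gmul g c)).

Arguments gpow {G}. Arguments is_subgroup {G}. Arguments gen_by {G}.
Arguments infinite_set {T}. Arguments conjugate_subgroups {G}.

Record MetricSpace := {
  mcar :> Type;
  dist : mcar -> mcar -> R;
  dist_ge0 : forall x y, 0 <= dist x y;
  dist_eq0 : forall x y, dist x y = 0 <-> x = y;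
  dist_sym : forall x y, dist x y = dist y x;
  dist_tri : forall x y z, dist x z <= dist x y + dist y z }.
Arguments dist {m}.

Section Metric.
Variable X : MetricSpace.

Definition cvg (u : nat -> X) (x : X) : Prop :=
  forall e, 0 < e -> exists N, forall n, (N <= n)%nat -> dist (u n) x < e.

Definition strictly_incr (phi : nat -> nat) : Prop := forall n, (phi n < phi (S n))%nat.

(** sequential compactness (equivalent to compactness in a metric space) *)
Definition compact_set (K : X -> Prop) : Prop :=
  forall u : nat -> X, (forall n, K (u n)) ->
    exists phi x, strictly_incr phi /\ K x /\ cvg (fun n => u (phi n)) x.

Definition continuous_map (f : X -> X) : Prop :=
  forall x e, 0 < e -> exists d, 0 < d /\ forall y, dist x y < d -> dist (f x) (f y) < e.

Definition open_set (A : X -> Prop) : Prop :=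
  forall x, A x -> exists r, 0 < r /\ forall y, dist x y < r -> A y.

Definition closure (A : X -> Prop) (x : X) : Prop :=
  forall s, 0 < s -> exists a, A a /\ dist x a < s.

(** closed r-neighbourhood  {x | d(x,A) <= r}  (d(x,A) = inf, +oo if A empty) *)
Definition cl_nbhd (r : R) (A : X -> Prop) (x : X) : Prop :=
  forall s, r < s -> exists a, A a /\ dist x a < s.

(** diam A < r  (diam = sup of distances, taken as 0 for the empty set) *)
Definition diam_lt (A : X -> Prop) (r : R) : Prop :=
  exists r', r' < r /\ forall x y, A x -> A y -> dist x y <= r'.

Definition diam_gt (A : X -> Prop) (r : R) : Prop :=
  exists x y, A x /\ A y /\ r < dist x y.

Definition setdist_gt (A : X -> Prop) (p : X) (r : R) : Prop :=
  exists r', r < r' /\ forall x, A x -> r' <= dist x p.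

Definition subset (A B : X -> Prop) : Prop := forall x, A x -> B x.
Definition strict_subset (A B : X -> Prop) : Prop :=
  subset A B /\ exists x, B x /\ ~ A x.
End Metric.
Arguments cvg {X}. Arguments strictly_incr : clear implicits. Arguments compact_set {X}.
Arguments continuous_map {X}. Arguments open_set {X}. Arguments closure {X}.
Arguments cl_nbhd {X}. Arguments diam_lt {X}. Arguments diam_gt {X}.
Arguments setdist_gt {X}. Arguments subset {X}. Arguments strict_subset {X}.

Record Action (G : Grp) (X : MetricSpace) := {
  act :> G -> X -> X;
  act_one : forall x, act gone x = x;
  act_mul : forall g h x, act (gmul g h) x = act g (act h x);
  act_cont : forall g, continuous_map (act g) }.

Section Dyn.
Variables (G : Grp) (X : MetricSpace) (A : Action G X).

Definition translate (g : G) (S : X -> Prop) (x : X) : Prop :=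
  exists y, S y /\ x = A g y.

Definition Stab (p : X) (g : G) : Prop := A g p = p.

Definition convergence_action : Prop :=
  forall g : nat -> G, (forall m n, g m = g n -> m = n) ->
    exists phi a b, strictly_incr phi /\
      forall K, compact_set K -> (forall x, K x -> x <> a) ->
        forall e, 0 < e -> exists N, forall n, (N <= n)%nat ->
          forall x, K x -> dist (A (g (phi n)) x) b < e.

Definition loxodromic (g : G) : Prop :=
  (forall n, (1 <= n)%nat -> gpow g n <> gone) /\
  exists a b, a <> b /\ A g a = a /\ A g b = b /\
    forall x, A g x = x -> x = a \/ x = b.

Definition parabolic_subgroup (H : G -> Prop) : Prop :=
  is_subgroup H /\ infinite_set H /\ ~ (exists h, H h /\ loxodromic h).

Definition conical_limit_point (x : X) : Prop :=
  exists (g : nat -> G) a b, a <> b /\ cvg (fun n => A (g n) x) a /\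
    forall y, y <> x -> cvg (fun n => A (g n) y) b.

Definition bounded_parabolic_point (p : X) : Prop :=
  parabolic_subgroup (Stab p) /\
  exists K, compact_set K /\ (forall x, K x -> x <> p) /\
    forall x, x <> p -> exists h k, Stab p h /\ K k /\ x = A h k.
End Dyn.
Arguments translate {G X}. Arguments Stab {G X}. Arguments convergence_action {G X}.
Arguments loxodromic {G X}. Arguments parabolic_subgroup {G X}.
Arguments conical_limit_point {G X}. Arguments bounded_parabolic_point {G X}.

(** * Relative hyperbolicity (Bowditch's dynamical definition) with
    [X] the Bowditch boundary, endowed with a fixed compatible metric. *)
Definition RelHypSetting (G : Grp) (P : list (G -> Prop)) (S : list G)
    (X : MetricSpace) (A : Action G X) : Prop :=
  (forall s, In s S -> In (ginv s) S) /\
  (forall g : G, gen_by (fun s => In s S) g) /\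
  P <> nil /\
  (forall H, In H P -> is_subgroup H /\ infinite_set H /\
      forall g, H g <-> gen_by (fun s => In s S /\ H s) g) /\
  (* X is compact, and (Gamma,P) non-elementary *)
  compact_set (fun _ : X => True) /\ infinite_set (fun _ : X => True) /\
  (* geometrically finite convergence action *)
  convergence_action A /\
  (forall x, conical_limit_point A x \/ bounded_parabolic_point A x) /\
  (* P is a set of representatives of the conjugacy classes of maximal
     parabolic subgroups (= stabilisers of bounded parabolic points) *)
  (forall H, In H P -> exists p, bounded_parabolic_point A p /\
      forall g, H g <-> Stab A p g) /\
  (forall p, bounded_parabolic_point A p ->
      exists H, In H P /\ conjugate_subgroups (Stab A p) H) /\
  (forall i j d, (i < length P)%nat -> (j < length P)%nat ->
      conjugate_subgroups (nth i P d) (nth j P d) -> i = j).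

Section Automaton.
Variables (G : Grp) (P : list (G -> Prop)) (X : MetricSpace) (A : Action G X).

Definition PiPt (p : X) : Prop := exists H, In H P /\ forall h, H h -> A h p = p.

Definition parabolic_pt (x : X) : Prop := exists g p, PiPt p /\ x = A g p.
Definition conical_pt (x : X) : Prop := ~ parabolic_pt x.

Variables (V W Vh Wh : X -> X -> Prop) (L : X -> G -> Prop).

Definition edge (z y : X) (alpha : G) : Prop :=
  (exists x, Vh z x /\ V y x) /\ L z alpha.

Definition AutomatonData (D DPi eps : R) (K : X -> X -> Prop) (Z : list X) : Prop :=
  0 < D /\ (forall x y, x <> y -> exists g, D < dist (A g x) (A g y)) /\
  0 < DPi /\
  (forall p, PiPt p ->
     compact_set (K p) /\ (forall x, K p x -> x <> p) /\
     (forall x, x <> p <-> exists h k, Stab A p h /\ K p k /\ x = A h k) /\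
     diam_gt (K p) DPi /\ setdist_gt (K p) p DPi) /\
  0 < eps /\ eps < D / 5 /\ eps < DPi / 5 /\
  NoDup Z /\
  (forall z, In z Z ->
     open_set (V z) /\ open_set (W z) /\ open_set (Vh z) /\ open_set (Wh z)) /\
  (forall z, In z Z -> conical_pt z ->
     exists a, (forall h, L z h <-> h = a) /\
       (forall x, Vh z x <-> V z (A a x)) /\ (forall x, Wh z x <-> W z (A a x))) /\
  (forall z, In z Z -> parabolic_pt z ->
     exists g p (F : list G), PiPt p /\ z = A g p /\
       (forall h, L z h <-> (exists s, Stab A p s /\ h = gmul g s) /\ ~ In h F) /\
       subset (Vh z) (Wh z) /\ (forall x, Wh z x -> x <> p) /\
       ~ cl_nbhd eps (Wh z) p) /\
  (forall x, exists z, In z Z /\ V z x) /\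
  (forall z, In z Z ->
     diam_lt (W z) eps /\
     diam_gt (Wh z) (4 * eps) /\
     subset (cl_nbhd (2 * eps) (Vh z)) (Wh z) /\
     (forall x, W z x <-> x = z \/ exists a, L z a /\ translate A a (Wh z) x) /\
     (forall x, V z x <-> x = z \/ exists a, L z a /\ translate A a (Vh z) x) /\
              subset (closure (V z)) (W z)) /\
  (forall y z, In y Z -> In z Z ->
     (~ exists x, closure (Vh z) x /\ closure (V y) x) <->
     (~ exists x, Vh z x /\ V y x)).

(** index set of a coding: [None] = infinite (conical), [Some n] = finite of length n *)
Definition in_idx (len : option nat) (k : nat) : Prop :=
  match len with None => True | Some n => (k <= n)%nat end.

(** generalized coding (g0, e): vertices z_0, z_1, ..., labels alpha_1, alpha_2, ... *)
Definition GenCoding (Z : list X) (len : option nat) (z : nat -> X) (alpha : nat -> G) : Prop :=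
  In (z O) Z /\
  (forall k, in_idx len (S k) -> In (z (S k)) Z /\ edge (z k) (z (S k)) (alpha (S k))) /\
  (forall n, len = Some n -> parabolic_pt (z n)).
End Automaton.

Fixpoint qg_seq (G : Grp) (g0 : G) (alpha : nat -> G) (k : nat) : G :=
  match k with O => g0 | S m => gmul (qg_seq G g0 alpha m) (alpha (S m)) end.
Arguments qg_seq {G}.

(* The defining conditions of the automaton force one-step nesting: along an
   edge z -> y labelled alpha, W(y) has diameter < eps and meets Vh(z) (at a
   point of V(y)), so it lies in the 2eps-neighbourhood of Vh(z), hence in
   Wh(z); since Wh(z) has diameter > 4eps the inclusion is strict, and
   alpha Wh(z) lies in W(z) by (C4).  Translating by g_k gives the strictly
   decreasing chain g_k W(z_k).  If g_i = g_j with i < j then z_i <> z_j,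
   because otherwise the chain would contain a set strictly inside itself;
   hence the indices where a fixed element occurs inject into Z. *)
From Stdlib Require Import Reals List Lra Lia Arith Classical_Prop.
Open Scope R_scope.

Section Metric.
Context {X : MetricSpace}.

Lemma strict_subset_trans (B C E : X -> Prop) :
  strict_subset B C -> strict_subset C E -> strict_subset B E.
Proof.
  intros [HBC _] [HCE [x [Ex nCx]]]. split.
  - intros w Bw. apply HCE, HBC, Bw.
  - exists x. split; [exact Ex | intros Bx; apply nCx, HBC, Bx].
Qed.

Lemma strict_subset_irrefl (B : X -> Prop) : ~ strict_subset B B.
Proof. intros [_ [x [Bx nBx]]]. contradiction. Qed.

Lemma closure_self {B : X -> Prop} {x} : B x -> closure B x.
Proof.
  intros Bx s Hs. exists x. split; [exact Bx|].
  rewrite (proj2 (dist_eq0 X x x) eq_refl). exact Hs.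
Qed.

Lemma diam_lt_le {B : X -> Prop} {r} r' : r <= r' -> diam_lt B r -> diam_lt B r'.
Proof. intros Hr [r0 [Hr0 Hd]]. exists r0. split; [lra | exact Hd]. Qed.

Lemma cl_nbhd_le (B : X -> Prop) r r' : r <= r' -> subset (cl_nbhd r B) (cl_nbhd r' B).
Proof. intros Hr x Hx s Hs. apply Hx. lra. Qed.

Lemma subset_cl_nbhd_of_diam_lt {B C : X -> Prop} {r x} :
  diam_lt B r -> B x -> C x -> subset B (cl_nbhd r C).
Proof.
  intros [r0 [Hr0 Hd]] Bx Cx w Bw s Hs. exists x. split; [exact Cx|].
  pose proof (Hd w x Bw Bx). lra.
Qed.

Lemma diam_gt_not_subset {B C : X -> Prop} {r} :
  diam_gt B r -> diam_lt C r -> exists t, B t /\ ~ C t.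
Proof.
  intros [u [v [Bu [Bv Huv]]]] [r0 [Hr0 Hd]].
  destruct (classic (C u)) as [Cu | nCu]; [| now exists u].
  destruct (classic (C v)) as [Cv | nCv]; [| now exists v].
  pose proof (Hd u v Cu Cv). lra.
Qed.
End Metric.

Section Translates.
Context {G : Grp} {X : MetricSpace} (A : Action G X).

Lemma act_inj g x y : A g x = A g y -> x = y.
Proof.
  intros H. rewrite <- (act_one A x), <- (act_one A y), <- (gmulVl G g), !act_mul, H.
  reflexivity.
Qed.

Lemma translate_strict_subset_mul g a (B C : X -> Prop) :
  strict_subset (translate A a B) C ->
  strict_subset (translate A (gmul g a) B) (translate A g C).
Proof.
  intros [HBC [x [Cx nBx]]]. split.
  - intros w [y [By ->]]. exists (A a y). split.
    + apply HBC. now exists y.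
    + apply act_mul.
  - exists (A g x). split; [now exists x|].
    intros [y [By He]]. rewrite act_mul in He. apply act_inj in He.
    apply nBx. now exists y.
Qed.

Lemma edge_translate_strict_subset {V W Vh Wh : X -> X -> Prop} {L : X -> G -> Prop}
    {eps} {z y : X} {alpha} :
  0 < eps ->
  diam_lt (W y) eps -> subset (closure (V y)) (W y) ->
  diam_gt (Wh z) (4 * eps) -> subset (cl_nbhd (2 * eps) (Vh z)) (Wh z) ->
  (forall a x, L z a -> translate A a (Wh z) x -> W z x) ->
  edge G X V Vh L z y alpha ->
  strict_subset (translate A alpha (W y)) (W z).
Proof.
  intros Heps C1y C5y C2z C3z C4z [[x [Vhx Vyx]] Lalpha].
  assert (HWy : subset (W y) (Wh z)).
  { intros w Ww. apply C3z.
    apply (cl_nbhd_le (Vh z) eps); [lra|].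
    apply (subset_cl_nbhd_of_diam_lt C1y (C5y x (closure_self Vyx)) Vhx w Ww). }
  assert (C1y' : diam_lt (W y) (4 * eps)) by (apply (diam_lt_le (r := eps)); [lra | exact C1y]).
  destruct (diam_gt_not_subset C2z C1y') as [t [Wht nWt]].
  split.
  - intros w [u [Wu ->]]. apply (C4z alpha); [exact Lalpha|].
    exists u. split; [apply HWy, Wu | reflexivity].
  - exists (A alpha t). split.
    + apply (C4z alpha); [exact Lalpha|]. now exists t.
    + intros [u [Wu He]]. apply act_inj in He. subst. contradiction.
Qed.
End Translates.

Lemma in_idx_mono {len : option nat} {i j} : (i <= j)%nat -> in_idx len j -> in_idx len i.
Proof. destruct len; simpl; intros; lia. Qed.

Lemma strict_subset_chain {X : MetricSpace} (B : nat -> X -> Prop) (len : option nat) :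
  (forall k, in_idx len (S k) -> strict_subset (B (S k)) (B k)) ->
  forall {i j}, (i < j)%nat -> in_idx len j -> strict_subset (B j) (B i).
Proof.
  intros Hstep i j. induction j as [|j IH]; intros Hij Hj; [lia|].
  destruct (Nat.eq_dec i j) as [-> | Hne]; [now apply Hstep|].
  apply strict_subset_trans with (B j); [now apply Hstep|].
  apply IH; [lia | apply (in_idx_mono (Nat.le_succ_diag_r j) Hj)].
Qed.

Lemma strict_subset_chain_inj {X : MetricSpace} (B : nat -> X -> Prop) (len : option nat) :
  (forall k, in_idx len (S k) -> strict_subset (B (S k)) (B k)) ->
  forall i j, in_idx len i -> in_idx len j -> B i = B j -> i = j.
Proof.
  intros Hstep i j Hi Hj Hij.
  destruct (lt_eq_lt_dec i j) as [[Hlt | Heq] | Hgt]; [| exact Heq |].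
  - destruct (strict_subset_irrefl (B i)).
    rewrite Hij at 1. exact (strict_subset_chain B len Hstep Hlt Hj).
  - destruct (strict_subset_irrefl (B j)).
    rewrite <- Hij at 1. exact (strict_subset_chain B len Hstep Hgt Hi).
Qed.

Lemma NoDup_length_le_of_inj_on {T U : Type} (f : T -> U) {ks : list T} {l : list U} :
  NoDup ks ->
  (forall a b, In a ks -> In b ks -> f a = f b -> a = b) ->
  (forall a, In a ks -> In (f a) l) ->
  (length ks <= length l)%nat.
Proof.
  intros Hnd Hinj Hl. rewrite <- (length_map f ks).
  apply NoDup_incl_length.
  - apply NoDup_map_NoDup_ForallPairs; [exact Hinj | exact Hnd].
  - intros y Hy. apply in_map_iff in Hy. destruct Hy as [k [<- Hk]]. now apply Hl.
Qed.

Theorem mainTheorem9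
  (G : Grp) (P : list (G -> Prop)) (S : list G) (X : MetricSpace) (A : Action G X)
  (D DPi eps : R) (K : X -> X -> Prop) (Z : list X)
  (V W Vh Wh : X -> X -> Prop) (L : X -> G -> Prop)
  (g0 : G) (len : option nat) (z : nat -> X) (alpha : nat -> G) :
  RelHypSetting P S A ->
  AutomatonData P A V W Vh Wh L D DPi eps K Z ->
  GenCoding P A V Vh L Z len z alpha ->
  (forall k, in_idx len (Datatypes.S k) ->
     strict_subset (translate A (qg_seq g0 alpha (Datatypes.S k)) (W (z (Datatypes.S k))))
                   (translate A (qg_seq g0 alpha k) (W (z k)))) /\
  (forall (gam : G) (ks : list nat), NoDup ks ->
     (forall k, In k ks -> in_idx len k /\ qg_seq g0 alpha k = gam) ->
     (length ks <= length Z)%nat).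
Proof.
  intros _ HA [Hz0 [Hstep _]].
  destruct HA as (_ & _ & _ & _ & Heps & _ & _ & _ & _ & _ & _ & _ & HC & _).
  set (B k := translate A (qg_seq g0 alpha k) (W (z k))).
  assert (HinZ : forall k, in_idx len k -> In (z k) Z).
  { intros [|k] Hk; [exact Hz0 | apply (Hstep k Hk)]. }
  assert (Hnest : forall k, in_idx len (Datatypes.S k) -> strict_subset (B (Datatypes.S k)) (B k)).
  { intros k Hk. destruct (Hstep k Hk) as [HZ1 Hedge].
    destruct (HC _ (HinZ k (in_idx_mono (Nat.le_succ_diag_r k) Hk))) as (_ & C2 & C3 & C4 & _).
    destruct (HC _ HZ1) as (C1 & _ & _ & _ & _ & C5).
    apply translate_strict_subset_mul.
    apply (edge_translate_strict_subset A Heps C1 C5 C2 C3 (L := L)); [|exact Hedge].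
    intros a x La Hx. apply C4. right. now exists a. }
  split; [exact Hnest|].
  intros gam ks Hnd Hks. apply (NoDup_length_le_of_inj_on z Hnd).
  - intros a b Ha Hb Hab.
    destruct (Hks a Ha) as [Ia Ga], (Hks b Hb) as [Ib Gb].
    apply (strict_subset_chain_inj B len Hnest a b Ia Ib).
    unfold B. now rewrite Ga, Gb, Hab.
  - intros k Hk. apply HinZ, (Hks k Hk).
Qed.
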